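(* Let $A$ be a local commutative ring, $N$ its nilradical, $E$ a non-zero $A$-module and $R=A\propto E$ the trivial ring extension of $A$ by $E$. Then $R$ is an fqp-ring if and only if $A$ is an fqp-ring and one of the following holds: (1) $A$ is a valuation domain and $E$ is divisible and uniserial; (2) $NE=0$ and $E$ is divisible and torsionfree as an $A/N$-module, each zero-divisor of $A$ belongs to $N$, and $N^2=0$.
   Context: The trivial ring extension $R=A\propto E$ is the ring with underlying group $A\times E$ and multiplication $(a,e)(a',e')=(aa',ae'+a'e)$. An $A$-module $V$ is $M$-projective if $\mathrm{Hom}_A(V,M)\to\mathrm{Hom}_A(V,M/X)$ is surjective for every submodule $X$ of $M$; $V$ is quasi-projective if it is $V$-projective. A ring is an fqp-ring if every finitely generated ideal is quasi-projective. A module is uniserial if its submodules are totally ordered by inclusion. *)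

From HB Require Import structures.
From mathcomp Require Import all_boot all_order all_algebra.
Set Implicit Arguments. Unset Strict Implicit. Unset Printing Implicit Defensive.
Import Order.TTheory GRing.Theory Num.Theory.
Local Open Scope ring_scope.

Section TrivExt.
Variables (A : comNzRingType) (E : lmodType A).

Definition triv_ext : Type := (A * E)%type.

HB.instance Definition _ := Choice.on triv_ext.
HB.instance Definition _ := GRing.Zmodule.on triv_ext.

Definition te_one : triv_ext := (1, 0).
Definition te_mul (x y : triv_ext) : triv_ext :=
  (x.1 * y.1, x.1 *: y.2 + y.1 *: x.2).

Lemma te_mulA : associative te_mul.
Proof.
move=> [a e] [b f] [c g]; rewrite /te_mul /=; congr (_, _); first by rewrite mulrA.
rewrite !scalerDr !scalerA addrA [c * a]mulrC [c * b]mulrC.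
by [].
Qed.

Lemma te_mulC : commutative te_mul.
Proof. by move=> [a e] [b f]; rewrite /te_mul /= mulrC addrC. Qed.

Lemma te_mul1 : left_id te_one te_mul.
Proof. by move=> [a e]; rewrite /te_mul /= mul1r scale1r scaler0 addr0. Qed.

Lemma te_mulDl : left_distributive te_mul +%R.
Proof.
move=> [a e] [b f] [c g]; rewrite /te_mul /=; congr (_, _); first by rewrite mulrDl.
rewrite scalerDl scalerDr -!addrA; congr (_ + _); rewrite addrCA; done.
Qed.

Lemma te_one_neq0 : te_one != 0.
Proof. by apply/negP => /eqP [] /eqP; rewrite oner_eq0. Qed.

HB.instance Definition _ :=
  GRing.Zmodule_isComNzRing.Build triv_ext te_mulA te_mulC te_mul1 te_mulDl te_one_neq0.

End TrivExt.

Section RingNotions.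
Variable T : comNzRingType.

Definition is_ideal (I : T -> Prop) : Prop :=
  I 0 /\ (forall x y, I x -> I y -> I (x + y)) /\ (forall r x, I x -> I (r * x)).

Definition gen_ideal (n : nat) (xs : 'I_n -> T) : T -> Prop :=
  fun y => exists rs : 'I_n -> T, y = \sum_(i < n) rs i * xs i.

Definition fg_ideal (I : T -> Prop) : Prop :=
  exists n (xs : 'I_n -> T), forall y, I y <-> gen_ideal xs y.

(* For submodules V, M of the regular T-module T:
   V is M-projective iff for every submodule X of M, every T-linear map
   V -> M/X lifts to a T-linear map V -> M.  A T-linear map V -> M/X is
   represented by a function h : T -> T sending V into M which is T-linear
   modulo X on V; a lift g satisfies g v - h v \in X for v \in V. *)
Definition M_projective (V M : T -> Prop) : Prop :=
  forall X : T -> Prop, is_ideal X -> (forall x, X x -> M x) ->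
  forall h : T -> T,
    (forall v, V v -> M (h v)) ->
    (forall r v w, V v -> V w -> X (h (r * v + w) - (r * h v + h w))) ->
  exists g : T -> T,
    [/\ forall v, V v -> M (g v),
        forall r v w, V v -> V w -> g (r * v + w) = r * g v + g w &
        forall v, V v -> X (g v - h v)].

Definition quasi_projective (V : T -> Prop) : Prop := M_projective V V.

Definition fqp_ring : Prop :=
  forall I : T -> Prop, fg_ideal I -> quasi_projective I.

Definition maximal_ideal (M : T -> Prop) : Prop :=
  [/\ is_ideal M, ~ M 1 &
      forall J : T -> Prop, is_ideal J -> ~ J 1 ->
        (forall x, M x -> J x) -> forall x, J x -> M x].

Definition local_ring : Prop :=
  exists M, maximal_ideal M /\
    forall M', maximal_ideal M' -> forall x, M' x <-> M x.

Definition nilpotent_elt (x : T) : Prop := exists n : nat, x ^+ n = 0.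

Definition zero_divisor (a : T) : Prop := exists b, b != 0 /\ a * b = 0.

Definition regular (a : T) : Prop := forall b, a * b = 0 -> b = 0.

Definition valuation_domain : Prop :=
  (forall a b : T, a * b = 0 -> a = 0 \/ b = 0) /\
  (forall a b : T, (exists c, b = a * c) \/ (exists c, a = b * c)).

End RingNotions.

Section ModuleNotions.
Variables (A : comNzRingType) (E : lmodType A).

Definition is_submodule (S : E -> Prop) : Prop :=
  S 0 /\ (forall x y, S x -> S y -> S (x + y)) /\ (forall (r : A) x, S x -> S (r *: x)).

Definition uniserial : Prop :=
  forall S1 S2 : E -> Prop, is_submodule S1 -> is_submodule S2 ->
    (forall x, S1 x -> S2 x) \/ (forall x, S2 x -> S1 x).

Definition divisible : Prop :=
  forall a : A, regular a -> forall e : E, exists e', e = a *: e'.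

(* a is regular in A/N, N the nilradical: ab ∈ N -> b ∈ N *)
Definition regular_mod_nil (a : A) : Prop :=
  forall b, nilpotent_elt (a * b) -> nilpotent_elt b.

(* E viewed as an A/N-module (meaningful when NE = 0) *)
Definition divisible_mod_nil : Prop :=
  forall a : A, regular_mod_nil a -> forall e : E, exists e', e = a *: e'.

Definition torsionfree_mod_nil : Prop :=
  forall (a : A) (e : E), regular_mod_nil a -> a *: e = 0 -> e = 0.

End ModuleNotions.

From HB Require Import structures.
From mathcomp Require Import all_boot all_order all_algebra.
From mathcomp Require Import ring.
From mathcomp Require classical_sets.
From Stdlib Require Import Classical ClassicalEpsilon.
Set Implicit Arguments. Unset Strict Implicit. Unset Printing Implicit Defensive.
Import GRing.Theory.
Local Open Scope ring_scope.

(* In a local ring with maximal ideal P, take x, y incomparable for divisibility.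
   Coordinates on the ideal (x, y) are unique modulo P, so every 2x2 matrix acts
   on (x, y)/P(x, y); if (x, y) is quasi-projective these actions lift to (x, y).
   Lifting the three maps x |-> y, y |-> x and x |-> x (the other generator
   going to 0) and applying them to the relation y.x - x.y = 0 puts x^2, xy
   and y^2 in P (x^2, xy, y^2), so all three vanish by Nakayama.  Applied in
   R = A ∝ E to pairs such as (a, 0) and (0, e), this yields the conditions on
   A and E.
   Conversely, in case (1) R is a chained ring, so finitely generated ideals
   are principal, and principal ideals are quasi-projective.  In case (2) the
   nilradical of R squares to zero; a finitely generated ideal of R is either
   principal or generated by nilpotents whose relations have nilpotent
   coefficients only, and such relations kill the ideal, which makes it
   quasi-projective. *)

Lemma choice_on (X Y : Type) (y0 : Y) (P : X -> Prop) (Q : X -> Y -> Prop) :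
  (forall x, P x -> exists y, Q x y) -> exists f : X -> Y, forall x, P x -> Q x (f x).
Proof.
move=> PQ; apply: (choice (fun x y => P x -> Q x y)) => x.
by case: (classic (P x)) => [/PQ [y Qy]|nPx]; [exists y|exists y0].
Qed.

Section Ideals.
Variable T : comNzRingType.
Implicit Types (x y z r s : T) (I V W X : T -> Prop).

Lemma ideal0 I : is_ideal I -> I 0.
Proof. by case. Qed.

Lemma idealD I x y : is_ideal I -> I x -> I y -> I (x + y).
Proof. by case=> _ [+ _]; apply. Qed.

Lemma idealM I r x : is_ideal I -> I x -> I (r * x).
Proof. by case=> _ [_ +]; apply. Qed.

Lemma idealMr I r x : is_ideal I -> I x -> I (x * r).
Proof. by move=> iI Ix; rewrite mulrC; apply: idealM. Qed.

Lemma idealN I x : is_ideal I -> I x -> I (- x).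
Proof. by move=> iI Ix; rewrite -mulN1r; apply: idealM. Qed.

Lemma idealB I x y : is_ideal I -> I x -> I y -> I (x - y).
Proof. by move=> iI Ix Iy; apply: idealD => //; apply: idealN. Qed.

Lemma ideal_sum I n (F : 'I_n -> T) :
  is_ideal I -> (forall i, I (F i)) -> I (\sum_(i < n) F i).
Proof.
move=> iI IF; apply: (big_ind I) => //; first exact: ideal0.
by move=> a b; apply: idealD.
Qed.

Lemma quasi_projective_ext V W :
  (forall y, V y <-> W y) -> quasi_projective V -> quasi_projective W.
Proof.
move=> VW qV X iX XW h hW hl.
have [g [gV g_lin gh]] := qV X iX (fun x Xx => proj2 (VW _) (XW _ Xx)) h
  (fun v Vv => proj2 (VW _) (hW v (proj1 (VW _) Vv)))
  (fun r v w Vv Vw => hl r v w (proj1 (VW _) Vv) (proj1 (VW _) Vw)).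
exists g; split => [v /VW/gV/VW //|r v w /VW Vv /VW Vw|v /VW]; [exact: g_lin|exact: gh].
Qed.

Lemma linear_at0 V (g : T -> T) : V 0 ->
  (forall r v w, V v -> V w -> g (r * v + w) = r * g v + g w) -> g 0 = 0.
Proof.
move=> V0 g_lin; have := g_lin 1 0 0 V0 V0; rewrite mulr0 addr0 mul1r => e.
by apply: (addrI (g 0)); rewrite addr0 -e.
Qed.

Lemma linear_mod_at0 V X (h : T -> T) : is_ideal X -> V 0 ->
  (forall r v w, V v -> V w -> X (h (r * v + w) - (r * h v + h w))) -> X (h 0).
Proof.
move=> iX V0 hl; have := idealN iX (hl 1 0 0 V0 V0).
by rewrite mulr0 addr0 mul1r opprB addrK.
Qed.

Lemma gen_ideal_ideal n (xs : 'I_n -> T) : is_ideal (gen_ideal xs).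
Proof.
split; first by exists (fun=> 0); rewrite big1 // => i _; rewrite mul0r.
split.
- move=> _ _ [a ->] [b ->]; exists (fun i => a i + b i).
  by rewrite -big_split /=; apply: eq_bigr => i _; rewrite mulrDl.
- move=> r _ [a ->]; exists (fun i => r * a i).
  by rewrite mulr_sumr; apply: eq_bigr => i _; rewrite mulrA.
Qed.

Lemma gen_ideal_gen n (xs : 'I_n -> T) j : gen_ideal xs (xs j).
Proof.
exists (fun i => (i == j)%:R).
by rewrite (bigD1 j) //= eqxx mul1r big1 ?addr0 // => i /negbTE ->; rewrite mul0r.
Qed.

Lemma gen_ideal_min n (xs : 'I_n -> T) I :
  is_ideal I -> (forall i, I (xs i)) -> forall y, gen_ideal xs y -> I y.
Proof. by move=> iI Ixs _ [c ->]; apply: (ideal_sum iI) => i; apply: (idealM _ iI). Qed.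

Lemma linear_mod_sum n (xs : 'I_n -> T) X (h : T -> T) : is_ideal X ->
  (forall r v w, gen_ideal xs v -> gen_ideal xs w -> X (h (r * v + w) - (r * h v + h w))) ->
  forall c : 'I_n -> T, X (h (\sum_(i < n) c i * xs i) - \sum_(i < n) c i * h (xs i)).
Proof.
move=> iX hl c; have iG := gen_ideal_ideal xs.
suff [] : gen_ideal xs (\sum_(i < n) c i * xs i) /\
          X (h (\sum_(i < n) c i * xs i) - \sum_(i < n) c i * h (xs i)) by [].
apply: (big_rec2 (fun v hv => gen_ideal xs v /\ X (h v - hv))).
  by rewrite subr0; split; [exact: ideal0 iG|exact: linear_mod_at0 iX (ideal0 iG) hl].
move=> i v hv _ [Gv Xv]; split; first exact: idealD iG (idealM _ iG (gen_ideal_gen _ _)) Gv.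
have -> : h (c i * xs i + v) - (c i * h (xs i) + hv) =
    (h (c i * xs i + v) - (c i * h (xs i) + h v)) + (h v - hv) by ring.
exact: idealD iX (hl _ _ _ (gen_ideal_gen _ _) Gv) Xv.
Qed.

(* Since relations among the generators kill the ideal, [xs i |-> h (xs i)]
   extends to a linear map, which lifts [h] exactly. *)
Lemma gen_ideal_quasi_projective n (xs : 'I_n -> T) :
  (forall c : 'I_n -> T, \sum_(i < n) c i * xs i = 0 ->
     forall i v, gen_ideal xs v -> c i * v = 0) ->
  quasi_projective (gen_ideal xs).
Proof.
move=> rel X iX _ h hV hl; have iG := gen_ideal_ideal xs.
have [cf cfE] := choice_on (fun=> 0) (fun v (Vv : gen_ideal xs v) => Vv).
have hxs i : gen_ideal xs (h (xs i)) by apply: hV; apply: gen_ideal_gen.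
pose lift (c : 'I_n -> T) := \sum_(i < n) c i * h (xs i).
have lift_wd c c' : \sum_(i < n) c i * xs i = \sum_(i < n) c' i * xs i -> lift c = lift c'.
  move=> e; have d0 : \sum_(i < n) (c i - c' i) * xs i = 0.
    by rewrite (eq_bigr _ (fun i _ => mulrBl _ _ _)) sumrB e subrr.
  apply/eqP; rewrite -subr_eq0 -sumrB; apply/eqP; apply: big1 => i _.
  by rewrite -mulrBl; apply: rel d0 i _ (hxs i).
exists (fun v => lift (cf v)); split.
- by move=> v _; apply: (ideal_sum iG) => i; apply: (idealM _ iG (hxs i)).
- move=> r v w Vv Vw; rewrite (lift_wd _ (fun i => r * cf v i + cf w i)).
    by rewrite /lift mulr_sumr -big_split; apply: eq_bigr => i _; rewrite mulrDl mulrA.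
  rewrite -cfE; last exact: idealD iG (idealM r iG Vv) Vw.
  rewrite (eq_bigr _ (fun i _ => mulrDl _ _ _)) big_split /=.
  by rewrite (eq_bigr _ (fun i _ => esym (mulrA _ _ _))) -mulr_sumr -!cfE.
- move=> v Vv; rewrite -opprB; apply: (idealN iX).
  by rewrite {1}(cfE v Vv); exact: linear_mod_sum iX hl (cf v).
Qed.

Definition principal z : T -> Prop := fun y => exists r, y = r * z.

Lemma principal_ideal z : is_ideal (principal z).
Proof.
split; first by exists 0; rewrite mul0r.
split; first by move=> _ _ [a ->] [b ->]; exists (a + b); rewrite mulrDl.
by move=> r _ [a ->]; exists (r * a); rewrite mulrA.
Qed.

Lemma principal_gen1 z y : principal z y <-> gen_ideal (fun _ : 'I_1 => z) y.
Proof.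
split=> [[r ->]|[c ->]]; last by exists (c ord0); rewrite big_ord1.
by exists (fun=> r); rewrite big_ord1.
Qed.

Lemma principal_quasi_projective z : quasi_projective (principal z).
Proof.
apply: quasi_projective_ext (fun y => iff_sym (principal_gen1 z y)) _.
apply: gen_ideal_quasi_projective => c; rewrite big_ord1 => cz i v /principal_gen1 [r ->].
by rewrite (ord1 i) mulrCA cz mulr0.
Qed.

Lemma gen_ideal_principal n (xs : 'I_n -> T) z :
  (forall i, principal z (xs i)) -> gen_ideal xs z ->
  forall y, gen_ideal xs y <-> principal z y.
Proof.
move=> xs_z zG y; split; first exact: (gen_ideal_min (principal_ideal z) xs_z (y := y)).
by case=> r ->; apply: idealM (gen_ideal_ideal xs) zG.
Qed.

Definition chained := forall x y, (exists c, y = c * x) \/ (exists c, x = c * y).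

Lemma chained_gen_principal : chained -> forall n (xs : 'I_n -> T),
  exists z, forall y, gen_ideal xs y <-> principal z y.
Proof.
move=> ch; elim=> [|n IH] xs.
  exists 0 => y; split=> [[c ->]|[r ->]]; first by rewrite big_ord0; exists 0; rewrite mul0r.
  by exists (fun=> 0); rewrite big_ord0 mulr0.
pose xs' (j : 'I_n) := xs (widen_ord (leqnSn n) j).
have xs'_xs y : gen_ideal xs' y -> gen_ideal xs y.
  by apply: (gen_ideal_min (gen_ideal_ideal xs)) => j; apply: gen_ideal_gen.
have xs_cases i : i = ord_max \/ exists j : 'I_n, i = widen_ord (leqnSn n) j.
  case: (ltnP i n) => [lt_in|le_ni]; first by right; exists (Ordinal lt_in); apply: val_inj.
  by left; apply: val_inj => /=; apply/eqP; rewrite eqn_leq le_ni andbT -ltnS ltn_ord.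
have [z' Hz'] := IH xs'; have z'G : gen_ideal xs' z' by apply/Hz'; exists 1; rewrite mul1r.
case: (ch z' (xs ord_max)) => [[c hc]|[c hc]].
- exists z'; apply: gen_ideal_principal (xs'_xs _ z'G) => i.
  case: (xs_cases i) => [->|[j ->]]; first by exists c.
  exact/Hz'/(gen_ideal_gen xs' j).
- exists (xs ord_max); apply: gen_ideal_principal (gen_ideal_gen xs _) => i.
  case: (xs_cases i) => [->|[j ->]]; first by exists 1; rewrite mul1r.
  have [a ha] := proj1 (Hz' _) (gen_ideal_gen xs' j).
  by exists (a * c); rewrite -mulrA -hc.
Qed.

Lemma chained_fqp : chained -> fqp_ring T.
Proof.
move=> ch I [n [xs Ixs]]; have [z Hz] := chained_gen_principal ch xs.
apply: (@quasi_projective_ext (principal z)); last exact: principal_quasi_projective.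
by move=> y; split=> [/Hz/Ixs|/Ixs/Hz].
Qed.

End Ideals.

Section Krull.
Import classical_sets.
Local Open Scope classical_set_scope.
Variable T : comNzRingType.

Let proper_ideal_with (u : T) (B : set T) := [/\ is_ideal B, ~ B 1 & B u].

Let chain_union_proper u (F : set (set T)) :
  (forall B z, F B -> B z -> proper_ideal_with u B) -> total_on F subset ->
  forall B0 z0, F B0 -> B0 z0 -> proper_ideal_with u (\bigcup_(B in F) B).
Proof.
move=> FP tot B0 z0 FB0 B0z0; have [iB0 _ B0u] := FP B0 z0 FB0 B0z0.
split; last by exists B0.
- split; first by exists B0 => //; apply: ideal0 iB0.
  split=> [a b [B1 FB1 B1a] [B2 FB2 B2b]|r a [B1 FB1 B1a]].
  + have [iB1 _ _] := FP B1 a FB1 B1a; have [iB2 _ _] := FP B2 b FB2 B2b.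
    case: (tot B1 B2 FB1 FB2) => sub.
    * by exists B2 => //; apply: idealD iB2 (sub a B1a) B2b.
    * by exists B1 => //; apply: idealD iB1 B1a (sub b B2b).
  + by have [iB1 _ _] := FP B1 a FB1 B1a; exists B1 => //; apply: idealM iB1 B1a.
- by case=> B1 FB1 B11; have [_ nB1 _] := FP B1 1 FB1 B11.
Qed.

(* Zorn's lemma for the proper ideals containing [u]; [set0] is added so that
   the empty chain has an upper bound. *)
Lemma nonunit_maximal_ideal (u : T) : ~ (exists v, u * v = 1) ->
  exists M, maximal_ideal M /\ M u.
Proof.
move=> nunit; pose Pf (B : set T) := B = set0 \/ proper_ideal_with u B.
have Pf_proper B z : Pf B -> B z -> proper_ideal_with u B by case=> // ->.
have chain F : F `<=` Pf -> total_on F subset -> Pf (\bigcup_(B in F) B).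
  move=> FP tot; case: (classic (exists z, (\bigcup_(B in F) B) z)) => [[z [B0 FB0 B0z]]|none].
    right; apply: chain_union_proper tot _ _ FB0 B0z => B y FB By.
    exact: Pf_proper (FP B FB) By.
  by left; apply/seteqP; split=> // z Fz; apply: none; exists z.
have [M [PM maxM]] := Zorn_bigcup chain.
have u_principal : proper_ideal_with u (principal u).
  split; [exact: principal_ideal| |by exists 1; rewrite mul1r].
  by case=> r e; apply: nunit; exists r; rewrite mulrC -e.
have [iM nM1 Mu] : proper_ideal_with u M.
  case: PM => // M0; exfalso; apply: (maxM (principal u)); last by right.
  rewrite M0; split=> [z []|sub].
  by apply: (sub u); exists 1; rewrite mul1r.
exists M; split=> //; split=> // J iJ nJ1 MJ x Jx; apply: NNPP => nMx.
apply: (maxM J); last by right; split=> //; apply: MJ.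
by split=> [z /MJ //|JM]; apply: nMx; apply: JM.
Qed.

End Krull.

Section LocalRing.
Variable T : comNzRingType.
Implicit Types (x y z w p q r s u : T) (P : T -> Prop).

Definition local_max_ideal P :=
  [/\ is_ideal P, ~ P 1 & forall u, ~ P u -> exists v, u * v = 1].

Lemma local_ring_max_ideal : local_ring T -> exists P, local_max_ideal P.
Proof.
case=> M [[iM nM1 _] Munique]; exists M; split=> // u nMu; apply: NNPP => nunit.
have [M' [maxM' M'u]] := nonunit_maximal_ideal nunit.
by apply: nMu; apply/(Munique M' maxM').
Qed.

Section MaxIdeal.
Variables (P : T -> Prop) (lP : local_max_ideal P).

Lemma local_unit1D p : P p -> exists v, (1 + p) * v = 1.
Proof.
case: lP => iP nP1 unit Pp; apply: unit => P1p; apply: nP1.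
by have := idealB iP P1p Pp; rewrite addrK.
Qed.

Lemma local_scale1D_eq0 (E : lmodType T) q (e : E) : P q -> (1 + q) *: e = 0 -> e = 0.
Proof.
move=> Pq qe; have [v hv] := local_unit1D Pq.
by rewrite -[e]scale1r -hv mulrC -scalerA qe scaler0.
Qed.

Lemma local_mul1D_eq0 q z : P q -> (1 + q) * z = 0 -> z = 0.
Proof. exact: (@local_scale1D_eq0 T^o). Qed.

Lemma local_nakayama1 z p w : P p -> z = p * z + w -> exists u, z = u * w.
Proof.
move=> Pp e; have [iP _ _] := lP; have [v hv] := local_unit1D (idealN iP Pp).
have e' : (1 - p) * z = w by rewrite mulrBl mul1r {1}e; ring.
by exists v; rewrite -e' mulrA [v * _]mulrC hv mul1r.
Qed.

Lemma local_nakayama2 z1 z2 p11 p12 p21 p22 :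
  P p11 -> P p12 -> P p21 -> P p22 ->
  z1 = p11 * z1 + p12 * z2 -> z2 = p21 * z1 + p22 * z2 -> z1 = 0 /\ z2 = 0.
Proof.
move=> P11 P12 P21 P22 e1 e2; have [iP _ _] := lP.
have [u hu] := local_nakayama1 P11 e1.
have e2' : z2 = (p21 * u * p12 + p22) * z2 + 0 by rewrite {1}e2 hu; ring.
have [u' hu'] := local_nakayama1 (idealD iP (idealMr _ iP (idealMr _ iP P21)) P22) e2'.
have z20 : z2 = 0 by rewrite hu' mulr0.
by split=> //; rewrite hu z20 !mulr0.
Qed.

Lemma local_nakayama3 z1 z2 z3 p11 p12 p13 p21 p22 p23 p31 p32 p33 :
  P p11 -> P p12 -> P p13 -> P p21 -> P p22 -> P p23 -> P p31 -> P p32 -> P p33 ->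
  z1 = p11 * z1 + p12 * z2 + p13 * z3 -> z2 = p21 * z1 + p22 * z2 + p23 * z3 ->
  z3 = p31 * z1 + p32 * z2 + p33 * z3 -> [/\ z1 = 0, z2 = 0 & z3 = 0].
Proof.
move=> P11 P12 P13 P21 P22 P23 P31 P32 P33 e1 e2 e3; have [iP _ _] := lP.
have e3' : z3 = p33 * z3 + (p31 * z1 + p32 * z2) by rewrite {1}e3; ring.
have [u hu] := local_nakayama1 P33 e3'.
have e1' : z1 = (p11 + p13 * u * p31) * z1 + (p12 + p13 * u * p32) * z2.
  by rewrite {1}e1 hu; ring.
have e2' : z2 = (p21 + p23 * u * p31) * z1 + (p22 + p23 * u * p32) * z2.
  by rewrite {1}e2 hu; ring.
have Pc p' p'' c : P p' -> P p'' -> P (p' + p'' * u * c).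
  by move=> Pp' Pp''; apply: idealD iP Pp' (idealMr _ iP (idealMr _ iP Pp'')).
have [z10 z20] := local_nakayama2 (Pc _ _ _ P11 P13) (Pc _ _ _ P12 P13)
  (Pc _ _ _ P21 P23) (Pc _ _ _ P22 P23) e1' e2'.
by split=> //; rewrite hu z10 z20; ring.
Qed.

End MaxIdeal.

Definition incomparable x y := ~ (exists c, y = c * x) /\ ~ (exists c, x = c * y).

Definition span2 x y : T -> Prop := fun z => exists r s, z = r * x + s * y.

Definition span2_in P x y : T -> Prop :=
  fun z => exists p q, [/\ P p, P q & z = p * x + q * y].

Lemma span2_ideal x y : is_ideal (span2 x y).
Proof.
split; first by exists 0, 0; rewrite !mul0r addr0.
split.
- by move=> _ _ [r [s ->]] [r' [s' ->]]; exists (r + r'), (s + s'); ring.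
- by move=> t _ [r [s ->]]; exists (t * r), (t * s); ring.
Qed.

Lemma fqp_span2 x y : fqp_ring T -> quasi_projective (span2 x y).
Proof.
move=> fqp; apply: fqp; exists 2, (fun i : 'I_2 => if i == ord0 then x else y) => z.
rewrite /gen_ideal; split=> [[r [s ->]]|[c ->]].
- by exists (fun i : 'I_2 => if i == ord0 then r else s); rewrite !big_ord_recr big_ord0 /= add0r.
- exists (c ord0), (c ord_max); rewrite !big_ord_recr big_ord0 /= add0r.
  by congr (c _ * _ + _); apply: val_inj.
Qed.

Section Incomparable.
Variables (P : T -> Prop) (x y : T).
Hypotheses (lP : local_max_ideal P) (xy : incomparable x y).

Lemma span2_in_ideal : is_ideal (span2_in P x y).
Proof.
case: lP => iP _ _; split; first by exists 0, 0; rewrite !mul0r addr0; split=> //; apply: ideal0.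
split.
- move=> _ _ [p [q [Pp Pq ->]]] [p' [q' [Pp' Pq' ->]]]; exists (p + p'), (q + q').
  by split; [apply: idealD|apply: idealD|ring].
- move=> t _ [p [q [Pp Pq ->]]]; exists (t * p), (t * q).
  by split; [apply: idealM|apply: idealM|ring].
Qed.

Lemma incomparable_coords r s r' s' :
  r * x + s * y = r' * x + s' * y -> P (r - r') /\ P (s - s').
Proof.
case: lP => iP _ unit; case: xy => nyx nxy e.
have ex : (r - r') * x = (s' - s) * y.
  by apply/eqP; rewrite -subr_eq0 -(subrr (r * x + s * y)) {2}e; apply/eqP; ring.
have ey : (s - s') * y = (r' - r) * x.
  by apply/eqP; rewrite -subr_eq0 -(subrr (r * x + s * y)) {2}e; apply/eqP; ring.
split; apply: NNPP => /unit [v hv].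
- by apply: nxy; exists (v * (s' - s)); rewrite -mulrA -ex mulrA [v * _]mulrC hv mul1r.
- by apply: nyx; exists (v * (r' - r)); rewrite -mulrA -ey mulrA [v * _]mulrC hv mul1r.
Qed.

Lemma span2_in_coords a b c d r s r' s' : r * x + s * y = r' * x + s' * y ->
  span2_in P x y (((r * a + s * c) * x + (r * b + s * d) * y) -
                  ((r' * a + s' * c) * x + (r' * b + s' * d) * y)).
Proof.
move=> /incomparable_coords [Pr Ps]; have [iP _ _] := lP.
exists ((r - r') * a + (s - s') * c), ((r - r') * b + (s - s') * d).
by split; [exact: idealD iP (idealMr _ iP Pr) (idealMr _ iP Ps)..|ring].
Qed.

Lemma span2_lift a b c d : quasi_projective (span2 x y) ->
  exists gx gy, [/\ span2_in P x y (gx - (a * x + b * y)),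
                    span2_in P x y (gy - (c * x + d * y)) &
                    forall r s, r * x + s * y = 0 -> r * gx + s * gy = 0].
Proof.
move=> qp; have iX := span2_in_ideal; have sp := span2_ideal x y.
have [cf cfE] : exists cf : T -> T * T,
    forall v, span2 x y v -> v = (cf v).1 * x + (cf v).2 * y.
  apply: (choice_on (0, 0) (Q := fun v rs => v = rs.1 * x + rs.2 * y)).
  by move=> v [r [s ->]]; exists (r, s).
pose h v := ((cf v).1 * a + (cf v).2 * c) * x + ((cf v).1 * b + (cf v).2 * d) * y.
have h_coords v r s : v = r * x + s * y ->
    span2_in P x y (h v - ((r * a + s * c) * x + (r * b + s * d) * y)).
  by move=> ev; apply: span2_in_coords; rewrite -ev -cfE //; exists r, s.
have hV v : span2 x y v -> span2 x y (h v) by move=> _; eexists; eexists.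
have hl r v w : span2 x y v -> span2 x y w -> span2_in P x y (h (r * v + w) - (r * h v + h w)).
  move=> Vv Vw; rewrite (_ : r * h v + h w =
    (((r * (cf v).1 + (cf w).1) * a + (r * (cf v).2 + (cf w).2) * c) * x +
     ((r * (cf v).1 + (cf w).1) * b + (r * (cf v).2 + (cf w).2) * d) * y));
    last by rewrite /h; ring.
  by apply: h_coords; rewrite {1}(cfE v Vv) {1}(cfE w Vw); ring.
have XV z : span2_in P x y z -> span2 x y z by case=> p [q [_ _ ->]]; exists p, q.
have [g [_ g_lin gh]] := qp _ iX XV h hV hl.
have Vx : span2 x y x by exists 1, 0; ring.
have Vy : span2 x y y by exists 0, 1; ring.
exists (g x), (g y); split.
- rewrite (_ : g x - _ = (g x - h x) + (h x - ((1 * a + 0 * c) * x + (1 * b + 0 * d) * y)));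
    last by ring.
  by apply: idealD iX (gh _ Vx) (h_coords _ _ _ _); ring.
- rewrite (_ : g y - _ = (g y - h y) + (h y - ((0 * a + 1 * c) * x + (0 * b + 1 * d) * y)));
    last by ring.
  by apply: idealD iX (gh _ Vy) (h_coords _ _ _ _); ring.
- move=> r s e; have g0 := linear_at0 (ideal0 sp) g_lin.
  have := g_lin r x (s * y) Vx (idealM s sp Vy); rewrite e g0.
  by have := g_lin s y 0 Vy (ideal0 sp); rewrite addr0 g0 addr0 => -> ->.
Qed.

Lemma span2_lift_eq a b c d : quasi_projective (span2 x y) ->
  exists p1 p2 p3 p4, [/\ P p1, P p2, P p3, P p4 &
    y * (a * x + b * y + (p1 * x + p2 * y)) = x * (c * x + d * y + (p3 * x + p4 * y))].
Proof.
move=> /(span2_lift a b c d) [gx [gy [[p1 [p2 [P1 P2 ex]]] [p3 [p4 [P3 P4 ey]]] rel]]].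
exists p1, p2, p3, p4; split=> //; rewrite -ex -ey ![_ + (_ - _)]addrC !subrK.
by apply/eqP; rewrite -subr_eq0 -mulNr; apply/eqP; apply: rel; ring.
Qed.

Lemma incomparable_sq0 : quasi_projective (span2 x y) ->
  [/\ x * x = 0, x * y = 0 & y * y = 0].
Proof.
move=> qp; have [iP _ _] := lP.
have [p1 [p2 [p3 [p4 [P1 P2 P3 P4 exx]]]]] := span2_lift_eq 0 0 1 0 qp.
have [q1 [q2 [q3 [q4 [Q1 Q2 Q3 Q4 exy]]]]] := span2_lift_eq 1 0 0 0 qp.
have [s1 [s2 [s3 [s4 [S1 S2 S3 S4 eyy]]]]] := span2_lift_eq 0 1 0 0 qp.
move/eqP: exx; rewrite -subr_eq0 => /eqP exx.
move/eqP: exy; rewrite -subr_eq0 => /eqP exy.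
move/eqP: eyy; rewrite -subr_eq0 => /eqP eyy.
have e1 : x * x = (- p3) * (x * x) + (p1 - p4) * (x * y) + p2 * (y * y).
  by apply/eqP; rewrite -subr_eq0 -oppr0 -exx; apply/eqP; ring.
have e2 : x * y = q3 * (x * x) + (q4 - q1) * (x * y) + (- q2) * (y * y).
  by apply/eqP; rewrite -subr_eq0 -exy; apply/eqP; ring.
have e3 : y * y = s3 * (x * x) + (s4 - s1) * (x * y) + (- s2) * (y * y).
  by apply/eqP; rewrite -subr_eq0 -eyy; apply/eqP; ring.
exact: (local_nakayama3 lP (idealN iP P3) (idealB iP P1 P4) P2 Q3 (idealB iP Q4 Q1)
  (idealN iP Q2) S3 (idealB iP S4 S1) (idealN iP S2) e1 e2 e3).
Qed.

Lemma incomparable_ann : quasi_projective (span2 x y) ->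
  exists p q, [/\ P p, P q & forall t, t * x = 0 -> t * (y + (p * x + q * y)) = 0].
Proof.
move=> /(span2_lift 0 1 0 0) [gx [gy [[p [q [Pp Pq e]]] _ rel]]].
exists p, q; split=> // t tx; rewrite -[y + _](_ : gx = _); last by rewrite -e; ring.
by have := rel t 0; rewrite tx !mul0r !addr0 => ->.
Qed.

End Incomparable.
Lemma fqp_local_divides_or_sq0 P x y : local_max_ideal P -> fqp_ring T ->
  (exists c, y = c * x) \/ (exists c, x = c * y) \/ (x * x = 0 /\ x * y = 0).
Proof.
move=> lP fqp; case: (classic (exists c, y = c * x)) => [|nyx]; [by left|right].
case: (classic (exists c, x = c * y)) => [|nxy]; [by left|right].
by have [] := incomparable_sq0 lP (conj nyx nxy) (fqp_span2 fqp).
Qed.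

End LocalRing.

Lemma regular_mod_nil_nonnil (A : comNzRingType) (a : A) :
  regular_mod_nil a -> ~ nilpotent_elt a.
Proof.
move=> ra na; have [k] := ra 1 (ltac:(by rewrite mulr1)).
by rewrite expr1n => /eqP; rewrite oner_eq0.
Qed.

Lemma comparable_uniserial (A : comNzRingType) (E : lmodType A) :
  (forall e f : E, (exists c, e = c *: f) \/ (exists c, f = c *: e)) -> uniserial E.
Proof.
move=> cmp S1 S2 [_ [_ S1Z]] [_ [_ S2Z]].
case: (classic (forall x, S1 x -> S2 x)) => [|n12]; [by left|right].
have [y [S1y nS2y]] : exists y, S1 y /\ ~ S2 y.
  by apply: NNPP => h; apply: n12 => z S1z; apply: NNPP => nS2z; apply: h; exists z.
move=> x S2x; apply: NNPP => nS1x; case: (cmp y x) => [[c hc]|[c hc]].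
- by apply: nS2y; rewrite hc; apply: S2Z.
- by apply: nS1x; rewrite hc; apply: S1Z.
Qed.

Section TrivialExtension.
Variables (A : comNzRingType) (E : lmodType A).
Local Notation R := (triv_ext E).
Implicit Types (a b c d : A) (e f : E).

Lemma te_mulE a b e f : ((a, e) : R) * (b, f) = (a * b, a *: f + b *: e).
Proof. by []. Qed.

Lemma te_addE a b e f : ((a, e) : R) + (b, f) = (a + b, e + f).
Proof. by []. Qed.

Lemma te_sumE n (F : 'I_n -> R) :
  \sum_(i < n) F i = (\sum_(i < n) (F i).1, \sum_(i < n) (F i).2).
Proof. by elim: n F => [|n IH] F; rewrite ?big_ord0 // !big_ord_recr /= IH. Qed.

Lemma te_local_max_ideal P : local_max_ideal P -> local_max_ideal (fun x : R => P x.1).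
Proof.
case=> iP nP1 unit; split=> //.
- split; first exact: ideal0 iP.
  by split=> [x y|r x]; [apply: idealD iP|apply: idealM iP].
- case=> u e /= /unit [v hv]; exists (v, - (v * v) *: e); rewrite te_mulE hv.
  by congr (_, _); rewrite scalerA mulrN mulrA hv mul1r scaleNr addNr.
Qed.

Section BaseIdeal.
Variables (n : nat) (xs : 'I_n -> A).
Let xs0 i : R := (xs i, 0).

Lemma te_gen_ideal_fst (z : R) : gen_ideal xs0 z -> gen_ideal xs z.1.
Proof. by case=> c ->; exists (fun i => (c i).1); rewrite te_sumE. Qed.

Lemma te_gen_ideal_pair d u f : gen_ideal xs d -> gen_ideal xs u -> gen_ideal xs0 (d, u *: f).
Proof.
move=> [c ->] [c' ->]; exists (fun i => (c i, c' i *: f)); rewrite te_sumE /=.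
congr (_, _); rewrite scaler_suml; apply: eq_bigr => i _.
by rewrite scaler0 add0r scalerA mulrC.
Qed.

Lemma te_gen_ideal_base d : gen_ideal xs d -> gen_ideal xs0 (d, 0).
Proof.
by move=> Gd; rewrite -(scale0r (0 : E)); apply: te_gen_ideal_pair (ideal0 (gen_ideal_ideal xs)).
Qed.

(* Extend [h] to [(a, e) |-> (h a, 0)] on [R], lift it modulo
   [{z | z.1 \in X} :&: (xs0)] and project back to [A]. *)
Lemma te_quasi_projective_base :
  quasi_projective (gen_ideal xs0) -> quasi_projective (gen_ideal xs).
Proof.
move=> qp X iX XG h hG hl; have iG := gen_ideal_ideal xs0.
pose X' (z : R) := X z.1 /\ gen_ideal xs0 z.
pose h' (z : R) : R := (h z.1, 0).
have iX' : is_ideal X'.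
  split; first by split; [exact: ideal0 iX|exact: ideal0 iG].
  split=> [x y [Xx Gx] [Xy Gy]|r x [Xx Gx]]; split.
  - exact: idealD iX Xx Xy.
  - exact: idealD iG Gx Gy.
  - exact: idealM iX Xx.
  - exact: idealM iG Gx.
have h'G v : gen_ideal xs0 v -> gen_ideal xs0 (h' v).
  by move=> /te_gen_ideal_fst /hG; apply: te_gen_ideal_base.
have h'l r v w : gen_ideal xs0 v -> gen_ideal xs0 w -> X' (h' (r * v + w) - (r * h' v + h' w)).
  case: r v w => [r1 r2] [v1 v2] [w1 w2] /te_gen_ideal_fst Gv /te_gen_ideal_fst Gw.
  rewrite (_ : _ - _ = (h (r1 * v1 + w1) - (r1 * h v1 + h w1), h v1 *: (- r2))); last first.
    by rewrite /h' /= te_mulE te_addE; congr (_, _); rewrite /= scaler0 add0r addr0 add0r scalerN.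
  split; first exact: hl.
  exact: te_gen_ideal_pair (XG _ (hl _ _ _ Gv Gw)) (hG _ Gv).
have [g' [g'G g'_lin g'h]] := qp X' iX' (fun z => @proj2 _ _) h' h'G h'l.
exists (fun a => (g' (a, 0)).1); split.
- by move=> v Gv; apply: te_gen_ideal_fst (g'G _ (te_gen_ideal_base Gv)).
- move=> r v w Gv Gw.
  rewrite (_ : ((r * v + w, 0) : R) = ((r, 0) : R) * (v, 0) + (w, 0)); last first.
    by rewrite te_mulE te_addE !scaler0 !addr0.
  by rewrite g'_lin //; apply: te_gen_ideal_base.
- by move=> v Gv; case: (g'h _ (te_gen_ideal_base Gv)).
Qed.

End BaseIdeal.

Lemma fqp_te_base : fqp_ring R -> fqp_ring A.
Proof.
move=> fqp I [n [xs Ixs]].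
apply: (@quasi_projective_ext A (gen_ideal xs)); first by move=> y; apply: iff_sym (Ixs y).
apply: te_quasi_projective_base; apply: fqp.
by exists n, (fun i => ((xs i, 0) : R)).
Qed.

End TrivialExtension.

Section FqpTrivialExtension.
Variables (A : comNzRingType) (E : lmodType A) (P : A -> Prop).
Local Notation R := (triv_ext E).
Hypotheses (lP : local_max_ideal P) (fqp : fqp_ring R).
Let lPR : local_max_ideal (fun x : R => P x.1) := te_local_max_ideal E lP.
Implicit Types (a b c d t : A) (e f : E).

Lemma te_divides_or_sq0 a e : (exists f, e = a *: f) \/ (a * a = 0 /\ a *: e = 0).
Proof.
case: (classic (exists f, e = a *: f)) => [|ndiv]; [by left|right].
have [->|a0] := eqVneq a 0; first by rewrite mul0r scale0r.
have inc : incomparable ((a, 0) : R) (0, e).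
  split=> -[[c1 c2]]; rewrite te_mulE => -[].
  - by move=> _ he; apply: ndiv; exists c2; rewrite he scaler0 add0r.
  - by rewrite mulr0 => ha _; rewrite ha eqxx in a0.
have [xx xy _] := incomparable_sq0 lPR inc (fqp_span2 fqp).
by rewrite te_mulE in xx xy; case: xx => -> _; case: xy => _; rewrite scaler0 addr0.
Qed.

Lemma te_nilpotent_scale0 a e : nilpotent_elt a -> a *: e = 0.
Proof.
move=> [k ak]; apply: NNPP => ae.
have step e' : a *: e' <> 0 -> exists e'', e' = a *: e'' /\ a *: e'' <> 0.
  case: (te_divides_or_sq0 a e') => [[f ->] ae'|[_ -> //]].
  by exists f; split=> // af; apply: ae'; rewrite af scaler0.
have iter j : exists e', e = a ^+ j *: e' /\ a *: e' <> 0.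
  elim: j => [|j [e' [-> ae']]]; first by exists e; rewrite expr0 scale1r.
  have [e'' [-> ae'']] := step e' ae'; exists e''; split=> //.
  by rewrite scalerA -exprSr.
by have [e' [he _]] := iter k; apply: ae; rewrite he ak scale0r scaler0.
Qed.

Lemma te_torsion_or_comparable f1 f2 t :
  ~ (exists c, f2 = c *: f1) -> ~ (exists c, f1 = c *: f2) -> t *: f1 = 0 -> t *: f2 = 0.
Proof.
move=> n21 n12 tf1.
have inc : incomparable ((0, f1) : R) (0, f2).
  split=> -[[c1 c2]]; rewrite te_mulE => -[_ he].
  - by apply: n21; exists c1; rewrite he scale0r addr0.
  - by apply: n12; exists c1; rewrite he scale0r addr0.
have [[p1 p2] [[q1 q2] [/= _ Pq ann]]] := incomparable_ann lPR inc (fqp_span2 fqp).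
have := ann (t, 0); rewrite te_mulE tf1 mulr0 scale0r addr0 => /(_ erefl) /(congr1 snd).
rewrite /= !scale0r !addr0 !scalerDr !scalerA (mulrC t p1) (mulrC t q1) -!scalerA tf1.
rewrite scaler0 add0r -{1}[t *: f2]scale1r -scalerDl scaler0 addr0.
exact: (local_scale1D_eq0 (E := E) lP Pq).
Qed.

Section NonzeroModule.
Hypothesis E_nz : exists e : E, e != 0.

Lemma te_nilpotent_sq0 a : nilpotent_elt a -> a * a = 0.
Proof.
case: E_nz => e0 e0_nz na; case: (te_divides_or_sq0 a e0) => [[f ef]|[-> _]] //.
by move: e0_nz; rewrite ef (te_nilpotent_scale0 f na) eqxx.
Qed.

Lemma te_nilpotent_mul0 a b : nilpotent_elt a -> nilpotent_elt b -> a * b = 0.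
Proof.
move=> na nb; have aa := te_nilpotent_sq0 na; have bb := te_nilpotent_sq0 nb.
case: (fqp_local_divides_or_sq0 a b lP (fqp_te_base fqp)) => [[c ->]|[[c ->]|[_ ->]]] //.
- by rewrite mulrCA aa mulr0.
- by rewrite -mulrA bb mulr0.
Qed.

Lemma te_zero_divisor_nilpotent c d : c * d = 0 -> d != 0 -> nilpotent_elt c.
Proof.
case: E_nz => e e_nz cd d_nz; apply: NNPP => nc.
have c_div e' : exists f, e' = c *: f.
  case: (te_divides_or_sq0 c e') => // -[cc _].
  by exfalso; apply: nc; exists 2%N; rewrite expr2.
have d_ann e' : d *: e' = 0 by have [f ->] := c_div e'; rewrite scalerA mulrC cd scale0r.
have [e1 he1] := c_div e.
have inc : incomparable ((d, 0) : R) (0, e1).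
  split=> -[[k1 k2]]; rewrite te_mulE => -[hd he].
  - by move: e_nz; rewrite he1 he scaler0 add0r d_ann scaler0 eqxx.
  - by move: d_nz; rewrite hd mulr0 eqxx.
have [[p1 p2] [[q1 q2] [/= _ Pq ann]]] := incomparable_ann lPR inc (fqp_span2 fqp).
have := ann (c, 0); rewrite te_mulE cd !scaler0 addr0 => /(_ erefl) /(congr1 snd).
rewrite /= !scaler0 !scale0r d_ann !add0r !addr0.
rewrite -{1}[e1]scale1r -scalerDl scalerA mulrC -scalerA -he1 => qe.
by move: e_nz; rewrite (local_scale1D_eq0 lP Pq qe) eqxx.
Qed.

Lemma te_torsion_nilpotent0 a e : regular_mod_nil a -> e != 0 -> a *: e = 0 ->
  forall b, nilpotent_elt b -> b = 0.
Proof.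
move=> ra e_nz ae b nb; apply: NNPP => b_nz.
have inc : incomparable ((0, e) : R) (b, 0).
  split=> -[[k1 k2]]; rewrite te_mulE => -[hb he].
  - by apply: b_nz; rewrite hb mulr0.
  - by move: e_nz; rewrite he scaler0 add0r (te_nilpotent_scale0 k2 nb) eqxx.
have [[p1 p2] [[q1 q2] [/= _ Pq ann]]] := incomparable_ann lPR inc (fqp_span2 fqp).
have := ann (a, 0); rewrite te_mulE ae mulr0 scale0r addr0 => /(_ erefl) /(congr1 fst).
rewrite /= mulr0 add0r -{1}[b]mul1r -mulrDl => ab.
apply: (regular_mod_nil_nonnil ra); apply: te_zero_divisor_nilpotent ab _.
by apply/eqP => qb; apply: b_nz; exact: (local_mul1D_eq0 lP Pq qb).
Qed.

Lemma te_nonnil_divides a : ~ nilpotent_elt a -> forall e, exists f, e = a *: f.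
Proof.
move=> na e; case: (te_divides_or_sq0 a e) => // -[aa _].
by exfalso; apply: na; exists 2%N; rewrite expr2.
Qed.

(* [z = u - k v] is killed by [r] but incomparable with [v], hence [r] kills [v]. *)
Lemma te_incomparable_no_common_multiple (u v e : E) r k :
  ~ (exists c, v = c *: u) -> ~ (exists c, u = c *: v) -> e != 0 ->
  e = r *: u -> e = (r * k) *: v -> False.
Proof.
move=> nvu nuv e_nz eu ev; have [iP nP1 unit] := lP.
pose z := u - k *: v.
have rz : r *: z = 0 by rewrite /z scalerBr scalerA -eu -ev subrr.
have nvz : ~ (exists c, v = c *: z).
  case=> c vz; have cu : c *: u = (1 + c * k) *: v.
    by rewrite scalerDl scale1r [in X in X + _]vz /z scalerBr scalerA subrK.
  case: (classic (P (1 + c * k))) => [P1|/unit [w hw]].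
  - have [w hw] : exists w, c * w = 1.
      apply: unit => Pc; apply: nP1.
      by have := idealB iP P1 (idealMr k iP Pc); rewrite addrK.
    by apply: nuv; exists (w * (1 + c * k)); rewrite -scalerA -cu scalerA mulrC hw scale1r.
  - by apply: nvu; exists (w * c); rewrite -scalerA cu scalerA mulrC hw scale1r.
have nzv : ~ (exists c, z = c *: v).
  by case=> c zv; apply: nuv; exists (c + k); rewrite scalerDl -zv /z subrK.
have rv := te_torsion_or_comparable nvz nzv rz.
by move: e_nz; rewrite ev mulrC -scalerA rv scaler0 eqxx.
Qed.

Lemma te_torsion_uniserial a e :
  (forall b c, (exists d, c = b * d) \/ (exists d, b = c * d)) ->
  (forall b, b != 0 -> forall f : E, exists g, f = b *: g) ->
  a != 0 -> e != 0 -> a *: e = 0 -> uniserial E.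
Proof.
move=> cmpA div a_nz e_nz ae; apply: comparable_uniserial => f1 f2; apply: NNPP => nc.
have n12 : ~ (exists c, f1 = c *: f2) by move=> h; apply: nc; left.
have n21 : ~ (exists c, f2 = c *: f1) by move=> h; apply: nc; right.
have [g1 hg1] := div a a_nz f1; have [g2 hg2] := div a a_nz f2.
have m12 : ~ (exists c, g1 = c *: g2).
  by case=> c hc; apply: n12; exists c; rewrite hg1 hg2 hc !scalerA mulrC.
have m21 : ~ (exists c, g2 = c *: g1).
  by case=> c hc; apply: n21; exists c; rewrite hg1 hg2 hc !scalerA mulrC.
have e_mult g f : f = a *: g -> f <> 0 -> exists r, e = r *: g.
  move=> fg f_nz; apply: NNPP => ne; case: (classic (exists c, g = c *: e)) => [[c gc]|nge].
  - by apply: f_nz; rewrite fg gc scalerA mulrC -scalerA ae scaler0.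
  - by apply: f_nz; rewrite fg (te_torsion_or_comparable nge ne ae).
have [r1 hr1] : exists r, e = r *: g1.
  by apply: e_mult hg1 _ => f10; apply: n12; exists 0; rewrite f10 scale0r.
have [r2 hr2] : exists r, e = r *: g2.
  by apply: e_mult hg2 _ => f20; apply: n21; exists 0; rewrite f20 scale0r.
case: (cmpA r1 r2) => [[k hk]|[k hk]].
- by rewrite hk in hr2; apply: (te_incomparable_no_common_multiple m21 m12 e_nz hr1 hr2).
- by rewrite hk in hr1; apply: (te_incomparable_no_common_multiple m12 m21 e_nz hr2 hr1).
Qed.

Lemma te_fqp_torsionfree : torsionfree_mod_nil E ->
  [/\ (forall a e, nilpotent_elt a -> a *: e = 0),
      divisible_mod_nil E /\ torsionfree_mod_nil E,
      (forall a, zero_divisor a -> nilpotent_elt a) &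
      (forall a b, nilpotent_elt a -> nilpotent_elt b -> a * b = 0)].
Proof.
move=> tf; split=> //.
- by move=> a e; apply: te_nilpotent_scale0.
- by split=> // a /regular_mod_nil_nonnil; apply: te_nonnil_divides.
- by move=> a [b [b_nz ab]]; apply: te_zero_divisor_nilpotent ab b_nz.
- exact: te_nilpotent_mul0.
Qed.

Lemma te_fqp_torsion : ~ torsionfree_mod_nil E ->
  valuation_domain A /\ divisible E /\ uniserial E.
Proof.
move=> ntf.
have [a [e [ra ae e_nz]]] : exists a e, [/\ regular_mod_nil a, a *: e = 0 & e != 0].
  apply: NNPP => h; apply: ntf => a e ra ae; apply: NNPP => e_nz; apply: h.
  by exists a, e; split=> //; apply/eqP.
have N0 := te_torsion_nilpotent0 ra e_nz ae.
have a_nz : a != 0.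
  by apply/eqP => a0; apply: (regular_mod_nil_nonnil ra); exists 1%N; rewrite expr1.
have div b : b != 0 -> forall f : E, exists g, f = b *: g.
  by move=> b_nz; apply: te_nonnil_divides => /N0 b0; rewrite b0 eqxx in b_nz.
have dom b c : b * c = 0 -> b = 0 \/ c = 0.
  move=> bc; have [->|c_nz] := eqVneq c 0; [by right|left].
  exact: N0 (te_zero_divisor_nilpotent bc c_nz).
have cmpA b c : (exists d, c = b * d) \/ (exists d, b = c * d).
  case: (fqp_local_divides_or_sq0 b c lP (fqp_te_base fqp)) => [[d ->]|[[d ->]|[bb _]]].
  - by left; exists d; rewrite mulrC.
  - by right; exists d; rewrite mulrC.
  - by right; exists 0; rewrite mulr0; apply: N0; exists 2%N; rewrite expr2.
split; first by split.
split; last exact: te_torsion_uniserial cmpA div a_nz e_nz ae.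
move=> b rb; apply: div; apply/eqP => b0.
by have /eqP := rb 1 (ltac:(by rewrite b0 mul0r)); rewrite oner_eq0.
Qed.

End NonzeroModule.
End FqpTrivialExtension.

Section Converse.
Variables (A : comNzRingType) (E : lmodType A).
Local Notation R := (triv_ext E).
Implicit Types (a b c d : A) (e f : E).

Lemma valuation_uniserial_chained :
  valuation_domain A -> divisible E -> uniserial E -> chained R.
Proof.
move=> [dom val] div us.
have cyclic g : is_submodule (fun e => exists r, e = r *: g).
  split; first by exists 0; rewrite scale0r.
  split; first by move=> _ _ [r ->] [s ->]; exists (r + s); rewrite scalerDl.
  by move=> t _ [r ->]; exists (t * r); rewrite scalerA.
have dir (x y : R) :
    (exists c, y.1 = x.1 * c) -> (exists z, y = z * x) \/ (exists z, x = z * y).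
  case: x y => [a e] [b f] /= [c bac]; have [a0|a_nz] := eqVneq a 0.
  - have b0 : b = 0 by rewrite bac a0 mul0r.
    case: (us _ _ (cyclic e) (cyclic f)) => sub.
    + have [r er] := sub e (ex_intro _ 1 (esym (scale1r e))).
      by right; exists (r, 0); rewrite a0 b0 te_mulE mulr0 scaler0 addr0 -er.
    + have [r fr] := sub f (ex_intro _ 1 (esym (scale1r f))).
      by left; exists (r, 0); rewrite a0 b0 te_mulE mulr0 scaler0 addr0 -fr.
  - have ra : regular a.
      by move=> z az; case: (dom _ _ az) => // a0; rewrite a0 eqxx in a_nz.
    have [g hg] := div a ra (f - c *: e).
    left; exists (c, g); rewrite te_mulE -hg mulrC -bac.
    by congr (_, _); rewrite addrC subrK.
move=> x y; case: (val x.1 y.1) => [|[c hc]]; first exact: dir.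
by case: (dir y x (ex_intro _ c hc)); [right|left].
Qed.

Section NilpotentCase.
Variable P : A -> Prop.
Hypotheses (lP : local_max_ideal P) (fqpA : fqp_ring A)
  (NE : forall a e, nilpotent_elt a -> a *: e = 0)
  (div : divisible_mod_nil E) (tf : torsionfree_mod_nil E)
  (zdN : forall a, zero_divisor a -> nilpotent_elt a)
  (N2 : forall a b, nilpotent_elt a -> nilpotent_elt b -> a * b = 0).
Local Notation nil := nilpotent_elt.

Lemma nonnil_regular a b : ~ nil a -> a * b = 0 -> b = 0.
Proof.
move=> na ab; apply: NNPP => b_nz; apply: na; apply: zdN.
by exists b; split=> //; apply/eqP.
Qed.

Lemma nonnil_regular_mod_nil a : ~ nil a -> regular_mod_nil a.
Proof.
move=> na b [k]; rewrite exprMn => abk; exists k; apply: nonnil_regular abk.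
by case=> m akm; apply: na; exists (k * m)%N; rewrite exprM.
Qed.

Lemma nilpotentD a b : nil a -> nil b -> nil (a + b).
Proof.
move=> na nb; exists 2%N.
by rewrite expr2 mulrDl !mulrDr (N2 na na) (N2 na nb) (N2 nb na) (N2 nb nb) !addr0.
Qed.

Lemma nilpotentMl a b : nil b -> nil (a * b).
Proof. by case=> k bk; exists k; rewrite exprMn bk mulr0. Qed.

Lemma nonnil_comparable a b : ~ nil a -> ~ nil b ->
  (exists c, b = c * a) \/ (exists c, a = c * b).
Proof.
move=> na nb; case: (fqp_local_divides_or_sq0 a b lP fqpA) => [|[|[aa _]]]; [by left|by right|].
by exfalso; apply: na; exists 2%N; rewrite expr2.
Qed.

Lemma nonnil_divides_nil a b : ~ nil a -> nil b -> exists c, b = c * a.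
Proof.
move=> na nb; case: (fqp_local_divides_or_sq0 a b lP fqpA) => [//|[[c ac]|[aa _]]];
  exfalso; apply: na; exists 2%N; rewrite expr2 //.
by rewrite ac mulrACA (N2 nb nb) mulr0.
Qed.

Lemma nonnil_divides_all (I : eqType) (s : seq I) (F : I -> A) :
  (exists2 i, i \in s & ~ nil (F i)) ->
  exists j, [/\ j \in s, ~ nil (F j) & forall i, i \in s -> exists c, F i = c * F j].
Proof.
elim: s => [[i //]|x s IH] ex.
case: (classic (exists2 i, i \in s & ~ nil (F i))) => [/IH [j [js nj hj]]|none].
  case: (classic (nil (F x))) => [nx|nx].
    exists j; split=> [|//|i]; first by rewrite inE js orbT.
    by rewrite inE => /orP [/eqP ->|/hj //]; apply: nonnil_divides_nil.
  case: (nonnil_comparable nj nx) => [[c xc]|[c jc]].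
    exists j; split=> [|//|i]; first by rewrite inE js orbT.
    by rewrite inE => /orP [/eqP ->|/hj //]; exists c.
  exists x; split=> [|//|i]; first by rewrite inE eqxx.
  rewrite inE => /orP [/eqP ->|/hj [d ->]]; first by exists 1; rewrite mul1r.
  by exists (d * c); rewrite jc mulrA.
have nx : ~ nil (F x).
  by case: ex => i; rewrite inE => /orP [/eqP -> //|i_s ni]; exfalso; apply: none; exists i.
exists x; split=> [|//|i]; first by rewrite inE eqxx.
rewrite inE => /orP [/eqP ->|i_s]; first by exists 1; rewrite mul1r.
by apply: nonnil_divides_nil nx _; apply: NNPP => ni; apply: none; exists i.
Qed.

Definition te_nil (x : R) := nil x.1.

Lemma te_nil_mul0 (x y : R) : te_nil x -> te_nil y -> x * y = 0.
Proof.
case: x y => [a e] [b f]; rewrite /te_nil /= => na nb.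
by rewrite te_mulE (N2 na nb) (NE f na) (NE e nb) addr0.
Qed.

Lemma te_nil_mulE (r x : R) : te_nil x -> r * x = ((r.1, 0) : R) * x.
Proof.
case: r x => [r1 r2] [a e]; rewrite /te_nil /= => na.
by rewrite !te_mulE (NE r2 na) scaler0.
Qed.

Lemma te_nonnil_regular a (z : R) : ~ nil a -> ((a, 0) : R) * z = 0 -> z = 0.
Proof.
case: z => z1 z2 na; rewrite te_mulE scaler0 addr0 => -[az1 az2].
by rewrite (nonnil_regular na az1) (tf (nonnil_regular_mod_nil na) az2).
Qed.

Lemma te_gen_ideal_nil n (xs : 'I_n -> R) y :
  (forall i, te_nil (xs i)) -> gen_ideal xs y -> te_nil y.
Proof.
move=> nxs [c ->]; rewrite /te_nil te_sumE /=.
apply: (@big_ind A (fun a => nil a)) => [|a b|i _]; first by exists 1%N; rewrite expr1.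
  exact: nilpotentD.
exact: nilpotentMl (nxs i).
Qed.

Lemma te_gen_ideal_principal n (xs : 'I_n -> R) : (exists i, ~ te_nil (xs i)) ->
  exists z, forall y, gen_ideal xs y <-> principal z y.
Proof.
case=> i0 ni0; have [j [_ nj hj]] := @nonnil_divides_all _ (enum 'I_n) (fun i => (xs i).1)
  (ex_intro2 _ _ i0 (mem_enum _ i0) ni0).
exists (xs j); apply: gen_ideal_principal (gen_ideal_gen xs j) => i.
have [d hd] := hj i (mem_enum _ i); move: hd nj.
case: (xs i) => [ai ei]; case: (xs j) => [aj ej] /= hd nj.
have [g hg] := div (nonnil_regular_mod_nil nj) (ei - d *: ej).
by exists (d, g); rewrite te_mulE -hg -hd addrC subrK.
Qed.

Lemma te_nil_gen_ideal_quasi_projective m (bs : 'I_m -> R) :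
  (forall i, te_nil (bs i)) ->
  (forall c : 'I_m -> R, \sum_(i < m) c i * bs i = 0 -> forall i, te_nil (c i)) ->
  quasi_projective (gen_ideal bs).
Proof.
move=> nbs free; apply: gen_ideal_quasi_projective => c c0 i v Gv.
exact: te_nil_mul0 (free c c0 i) (te_gen_ideal_nil nbs Gv).
Qed.

(* The non-nilpotent coefficient [a_j] divides all the others and [(a_j, 0)] is
   regular in [R], so the relation can be divided by it: [xs j] is redundant. *)
Lemma te_nil_drop_generator n (xs c : 'I_n.+1 -> R) : (forall i, te_nil (xs i)) ->
  \sum_(i < n.+1) c i * xs i = 0 -> (exists i, ~ te_nil (c i)) ->
  exists j, forall y, gen_ideal xs y <-> gen_ideal (fun k => xs (lift j k)) y.
Proof.
move=> nxs c0 [i0 ni0].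
have [j [_ nj hj]] := @nonnil_divides_all _ (enum 'I_n.+1) (fun i => (c i).1)
  (ex_intro2 _ _ i0 (mem_enum _ i0) ni0).
have [d hd] : exists d : 'I_n.+1 -> A, forall i, (c i).1 = d i * (c j).1.
  by apply: (choice (fun i di => (c i).1 = di * (c j).1)) => i; apply: hj; rewrite mem_enum.
have cj_dxs0 : (((c j).1, 0) : R) * \sum_(i < n.+1) ((d i, 0) : R) * xs i = 0.
  rewrite mulr_sumr -[RHS]c0; apply: eq_bigr => i _.
  by rewrite (te_nil_mulE (c i) (nxs i)) (hd i) mulrA te_mulE [d i * _]mulrC !scaler0 addr0.
have dxs0 := te_nonnil_regular nj cj_dxs0.
have dj : d j = 1.
  apply/eqP; rewrite eq_sym -subr_eq0; apply/eqP; apply: (nonnil_regular nj).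
  by rewrite mulrBr mulr1 mulrC -hd subrr.
have xsj : xs j = - \sum_(k < n) ((d (lift j k), 0) : R) * xs (lift j k).
  move: dxs0; rewrite (bigD1_ord j) //= dj -[((1, 0) : R)]/(1 : R) mul1r.
  by move/eqP; rewrite addr_eq0 => /eqP.
pose ys k := xs (lift j k); have iY := gen_ideal_ideal ys.
exists j => y; split; last first.
  by apply: (gen_ideal_min (gen_ideal_ideal xs)) => k; apply: gen_ideal_gen.
apply: (gen_ideal_min iY) => i; case: (unliftP j i) => [k ->|->]; first exact: gen_ideal_gen.
rewrite xsj; apply: (idealN iY); apply: (ideal_sum iY) => k.
exact: (idealM _ iY (gen_ideal_gen ys k)).
Qed.

Lemma te_nil_gen_ideal_free n (xs : 'I_n -> R) : (forall i, te_nil (xs i)) ->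
  exists m (bs : 'I_m -> R), [/\ forall i, te_nil (bs i),
    forall y, gen_ideal xs y <-> gen_ideal bs y &
    forall c : 'I_m -> R, \sum_(i < m) c i * bs i = 0 -> forall i, te_nil (c i)].
Proof.
elim: n xs => [|n IH] xs nxs; first by exists 0%N, xs; split=> // c _ [].
case: (classic (forall c : 'I_n.+1 -> R, \sum_(i < n.+1) c i * xs i = 0 ->
  forall i, te_nil (c i))) => [free|nfree]; first by exists n.+1, xs.
have [c [c0 nc]] : exists c : 'I_n.+1 -> R,
    \sum_(i < n.+1) c i * xs i = 0 /\ exists i, ~ te_nil (c i).
  apply: NNPP => h; apply: nfree => c c0 i; apply: NNPP => ni.
  by apply: h; exists c; split=> //; exists i.
have [j xs_ys] := te_nil_drop_generator nxs c0 nc.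
have [m [bs [nbs ys_bs free]]] := IH (fun k => xs (lift j k)) (fun k => nxs _).
by exists m, bs; split=> // y; split=> [/xs_ys/ys_bs|/ys_bs/xs_ys].
Qed.

Lemma te_fqp_nilpotent_case : fqp_ring R.
Proof.
move=> I [n [xs Ixs]].
case: (classic (exists i, ~ te_nil (xs i))) => [nonnil|nil_gens].
  have [z xs_z] := te_gen_ideal_principal nonnil.
  apply: (@quasi_projective_ext _ (principal z)); last exact: principal_quasi_projective.
  by move=> y; split=> [/xs_z/Ixs|/Ixs/xs_z].
have nxs i : te_nil (xs i) by apply: NNPP => ni; apply: nil_gens; exists i.
have [m [bs [nbs xs_bs free]]] := te_nil_gen_ideal_free nxs.
apply: (@quasi_projective_ext _ (gen_ideal bs)).
  by move=> y; split=> [/xs_bs/Ixs|/Ixs/xs_bs].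
exact: te_nil_gen_ideal_quasi_projective nbs free.
Qed.

End NilpotentCase.
End Converse.

Theorem theorem4p2 (A : comNzRingType) (E : lmodType A) :
  local_ring A -> (exists e : E, e != 0) ->
  (fqp_ring (triv_ext E) <->
   fqp_ring A /\
   ((valuation_domain A /\ divisible E /\ uniserial E) \/
    [/\ (forall (a : A) (e : E), nilpotent_elt a -> a *: e = 0),
        divisible_mod_nil E /\ torsionfree_mod_nil E,
        (forall a : A, zero_divisor a -> nilpotent_elt a) &
        (forall a b : A, nilpotent_elt a -> nilpotent_elt b -> a * b = 0)])).
Proof.
move=> local E_nz; have [P lP] := local_ring_max_ideal local; split.
- move=> fqp; split; first exact: fqp_te_base fqp.
  case: (classic (torsionfree_mod_nil E)) => [tf|ntf].
  + by right; apply: te_fqp_torsionfree lP fqp E_nz tf.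
  + by left; apply: te_fqp_torsion lP fqp E_nz ntf.
- case=> fqpA [[val [div us]]|[NE [div tf] zdN N2]].
  + exact: chained_fqp (valuation_uniserial_chained val div us).
  + exact: te_fqp_nilpotent_case lP fqpA NE div tf zdN N2.
Qed.
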